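(* Let $\Lambda$ be a row-finite $k$-graph with no sources and $R$ a commutative ring with $1$. Let $\mu,\nu\in\Lambda$ with $s(\mu)=s(\nu)$ and $r\in R\setminus\{0\}$ such that $r\,s_\mu s_{\nu^*}\in\mathcal{D}'$. Then $s_\mu s_{\mu^*}=s_\nu s_{\nu^*}$.
   Context: A $k$-graph is a countable category $\Lambda$ (vertices $\Lambda^0$, paths, maps $r,s$) with a degree functor $d:\Lambda\to\mathbb{N}^k$ satisfying unique factorization: if $d(\lambda)=m+n$ there are unique $\mu,\nu$ with $s(\mu)=r(\nu)$, $d(\mu)=m,d(\nu)=n$, $\lambda=\mu\nu$. $v\Lambda^n$ denotes paths of degree $n$ with range $v$; row-finite with no sources means each $v\Lambda^n$ is finite and nonempty. ${\rm KP}_R(\Lambda)$ is the universal $R$-algebra generated by $p_v$ ($v\in\Lambda^0$), $s_\lambda,s_{\lambda^*}$ ($d(\lambda)\ne0$) with relations (KP1) $p_v$ mutually orthogonal idempotents; (KP2) $s_\lambda s_\mu=s_{\lambda\mu}$, $s_{\mu^*}s_{\lambda^*}=s_{(\lambda\mu)^*}$, $p_{r(\lambda)}s_\lambda=s_\lambda=s_\lambda p_{s(\lambda)}$, $p_{s(\lambda)}s_{\lambda^*}=s_{\lambda^*}=s_{\lambda^*}p_{r(\lambda)}$ when $r(\mu)=s(\lambda)$; (KP3) $s_{\lambda^*}s_\mu=\delta_{\lambda,\mu}p_{s(\lambda)}$ when $d(\lambda)=d(\mu)$; (KP4) $p_v=\sum_{\lambda\in v\Lambda^n}s_\lambda s_{\lambda^*}$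 for $n\ne0$. Convention $s_v=s_{v^*}=p_v$. $\mathcal{D}$ is the $R$-subalgebra generated by $\{s_\mu s_{\mu^*}:\mu\in\Lambda\}$, and $\mathcal{D}'=\{a\in{\rm KP}_R(\Lambda): ad=da\ \forall d\in\mathcal{D}\}$. *)

From HB Require Import structures.
From mathcomp Require Import all_boot all_algebra.
Set Implicit Arguments. Unset Strict Implicit. Unset Printing Implicit Defensive.
Import GRing.Theory.
Local Open Scope ring_scope.

(* k-graphs.  A k-graph is a countable small category (objects = vertices, *)
(* morphisms = paths) with a degree functor d : Lambda -> N^k satisfying   *)
(* unique factorisation.  Degrees are functions 'I_k -> nat.  Composition  *)
(* is a total function [comp] which is only meaningful (and only           *)
(* constrained) on composable pairs (s(x) = r(y)); [comp x y] is x y.      *)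

Record kgraph (k : nat) := KGraph {
  vert : countType;
  kpath : countType;
  rg : kpath -> vert;
  sr : kpath -> vert;
  comp : kpath -> kpath -> kpath;
  idp : vert -> kpath;
  deg : kpath -> 'I_k -> nat;
  rg_idp : forall v, rg (idp v) = v;
  sr_idp : forall v, sr (idp v) = v;
  rg_comp : forall x y, sr x = rg y -> rg (comp x y) = rg x;
  sr_comp : forall x y, sr x = rg y -> sr (comp x y) = sr y;
  comp_idl : forall x, comp (idp (rg x)) x = x;
  comp_idr : forall x, comp x (idp (sr x)) = x;
  compA : forall x y z, sr x = rg y -> sr y = rg z ->
            comp x (comp y z) = comp (comp x y) z;
  deg_idp : forall v i, deg (idp v) i = 0%N;
  deg_comp : forall x y, sr x = rg y -> forall i, deg (comp x y) i = (deg x i + deg y i)%N;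
  factorisation : forall (l : kpath) (m n : 'I_k -> nat),
    (forall i, deg l i = (m i + n i)%N) ->
    exists mu nu, [/\ sr mu = rg nu, (forall i, deg mu i = m i),
                     (forall i, deg nu i = n i) & l = comp mu nu];
  factorisation_uniq : forall (m n : 'I_k -> nat) mu nu mu' nu',
    sr mu = rg nu -> sr mu' = rg nu' ->
    (forall i, deg mu i = m i) -> (forall i, deg nu i = n i) ->
    (forall i, deg mu' i = m i) -> (forall i, deg nu' i = n i) ->
    comp mu nu = comp mu' nu' -> mu = mu' /\ nu = nu'
}.

Arguments rg {k} _ _.
Arguments sr {k} _ _.
Arguments comp {k} _ _ _.
Arguments idp {k} _ _.
Arguments deg {k} _ _ _.

Definition enumerates {k} (L : kgraph k) (v : vert L) (n : 'I_k -> nat)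
    (s : seq (kpath L)) : Prop :=
  uniq s /\ forall l, l \in s <-> (rg L l = v /\ forall i, deg L l i = n i).

Definition row_finite_no_sources {k} (L : kgraph k) : Prop :=
  forall (v : vert L) (n : 'I_k -> nat),
    (exists s, enumerates v n s) /\
    (exists l, rg L l = v /\ forall i, deg L l i = n i).

(* Kumjian-Pask families.  We use the convention s_v = s_{v^*} = p_v,      *)
(* i.e. a family is given by p : vertices -> A and s, st : paths -> A      *)
(* (st l stands for s_{l^*}), with s l = st l = p (r l) on degree-0 paths  *)
(* (which are exactly the identities).                                     *)

Definition is_KP_family {k} (L : kgraph k) (R : comNzRingType) (A : algType R)
    (p : vert L -> A) (s st : kpath L -> A) : Prop :=
  (forall l, (forall i, deg L l i = 0%N) -> s l = p (rg L l) /\ st l = p (rg L l)) /\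
  (forall v, p v * p v = p v) /\
  (forall v w, v <> w -> p v * p w = 0) /\
  (forall l mu, rg L mu = sr L l ->
     s l * s mu = s (comp L l mu) /\ st mu * st l = st (comp L l mu)) /\
  (forall l, p (rg L l) * s l = s l /\ s l * p (sr L l) = s l /\
             p (sr L l) * st l = st l /\ st l * p (rg L l) = st l) /\
  (forall l mu, (forall i, deg L l i = deg L mu i) ->
     st l * s mu = if l == mu then p (sr L l) else 0) /\
  (forall v (n : 'I_k -> nat) (sq : seq (kpath L)), (exists i, n i <> 0%N) ->
     enumerates v n sq -> p v = \sum_(l <- sq) s l * st l).

Inductive gen_subalg (R : comNzRingType) (A : algType R) (G : A -> Prop) : A -> Prop :=
  | gs_gen x : G x -> gen_subalg G x
  | gs_zero : gen_subalg G 0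
  | gs_add x y : gen_subalg G x -> gen_subalg G y -> gen_subalg G (x + y)
  | gs_scale (c : R) x : gen_subalg G x -> gen_subalg G (c *: x)
  | gs_mul x y : gen_subalg G x -> gen_subalg G y -> gen_subalg G (x * y).

Definition KP_gens {k} (L : kgraph k) (R : comNzRingType) (A : algType R)
    (p : vert L -> A) (s st : kpath L -> A) (x : A) : Prop :=
  (exists v, x = p v) \/ (exists l, x = s l) \/ (exists l, x = st l).

Definition KP_universal {k} (L : kgraph k) (R : comNzRingType) (A : algType R)
    (p : vert L -> A) (s st : kpath L -> A) : Prop :=
  forall (B : algType R) (p' : vert L -> B) (s' st' : kpath L -> B),
    is_KP_family p' s' st' ->
    exists phi : A -> B,
      [/\ (forall x y, phi (x + y) = phi x + phi y),
          (forall (c : R) x, phi (c *: x) = c *: phi x),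
          (forall x y, phi (x * y) = phi x * phi y),
          (forall v, phi (p v) = p' v) &
          (forall l, phi (s l) = s' l /\ phi (st l) = st' l)].

(* KP_R(Lambda), realised as the non-unital subalgebra of A generated by a  *)
(* universal KP family (p, s, st) in A.                                    *)
Definition KP_alg {k} (L : kgraph k) (R : comNzRingType) (A : algType R)
    (p : vert L -> A) (s st : kpath L -> A) : A -> Prop :=
  gen_subalg (KP_gens p s st).

Definition KP_diag {k} (L : kgraph k) (R : comNzRingType) (A : algType R)
    (s st : kpath L -> A) : A -> Prop :=
  gen_subalg (fun x => exists mu, x = s mu * st mu).

Definition KP_diag_commutant {k} (L : kgraph k) (R : comNzRingType) (A : algType R)
    (p : vert L -> A) (s st : kpath L -> A) (a : A) : Prop :=
  KP_alg p s st a /\ forall d, KP_diag s st d -> a * d = d * a.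

(* Commuting [r s_mu s_nu^*] with the projections [s_mu s_mu^*] and [s_nu s_nu^*], and
   multiplying the two resulting identities by [s_nu s_mu^*] on the left, resp. the right,
   gives [r s_mu s_mu^* = r s_nu s_nu^* s_mu s_mu^* = r s_nu s_nu^*].  To cancel [r],
   expand both projections by (KP4) as sums of [s_l s_l^*] over paths [l] of one common
   degree [N]; compressing such a sum by [s_l^* _ s_l] yields [p_(s l)] or [0] according
   as [l] occurs in it.  Since [r p_v <> 0] for every vertex [v] -- in the representation
   of KP_R(Lambda) by operators on R-valued functions on infinite paths, [p_v] multiplies
   by the indicator of the paths with range [v] -- both sums run over the same paths. *)

From HB Require Import structures.
From mathcomp Require Import all_boot all_algebra.
From mathcomp Require boolp.
From Stdlib Require Import ClassicalEpsilon FunctionalExtensionality ProofIrrelevance.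
Set Implicit Arguments. Unset Strict Implicit. Unset Printing Implicit Defensive.
Import GRing.Theory.

Section Factorisation.
Variables (k : nat) (L : kgraph k).
Local Notation P := (kpath L).
Local Notation dg := (deg L).

Definition deg_le (m n : 'I_k -> nat) := forall i, m i <= n i.
Definition deg_add (m n : 'I_k -> nat) i := m i + n i.
Definition deg0 : 'I_k -> nat := fun _ => 0.

Lemma deg_le_addr m n : deg_le m (deg_add m n).
Proof. by move=> i; apply: leq_addr. Qed.

Lemma deg_le_trans m n p : deg_le m n -> deg_le n p -> deg_le m p.
Proof. by move=> h1 h2 i; apply: leq_trans (h1 i) (h2 i). Qed.

Lemma deg_le_add2l a m n : deg_le m n -> deg_le (deg_add a m) (deg_add a n).
Proof. by move=> h i; rewrite leq_add2l. Qed.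

Lemma deg_addA a b c : deg_add a (deg_add b c) = deg_add (deg_add a b) c.
Proof. by apply: functional_extensionality => i; rewrite /deg_add addnA. Qed.

Lemma deg_comp_add a b : sr L a = rg L b -> dg (comp L a b) = deg_add (dg a) (dg b).
Proof. by move=> h; apply: functional_extensionality; apply: deg_comp. Qed.

Definition is_factorisation (l : P) (m : 'I_k -> nat) (ab : P * P) : Prop :=
  [/\ sr L ab.1 = rg L ab.2, (forall i, dg ab.1 i = m i),
       (forall i, dg ab.2 i = dg l i - m i) & l = comp L ab.1 ab.2].

Definition factor l m : P * P := epsilon (inhabits (l, l)) (is_factorisation l m).

(* [pre l m] and [suf l m] are the paper's [l(0, m)] and [l(m, d(l))]. *)
Definition pre l m := (factor l m).1.
Definition suf l m := (factor l m).2.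

Lemma pre_sufP l m : deg_le m (dg l) ->
  [/\ sr L (pre l m) = rg L (suf l m), (forall i, dg (pre l m) i = m i),
      (forall i, dg (suf l m) i = dg l i - m i) & l = comp L (pre l m) (suf l m)].
Proof.
move=> hm; apply: (@epsilon_spec _ _ (is_factorisation l m)).
have [a [b [hab ha hb e]]] :=
  @factorisation _ L l m (fun i => dg l i - m i) (fun i => esym (subnKC (hm i))).
by exists (a, b); split.
Qed.

Lemma pre_suf_unique l m a b : sr L a = rg L b -> (forall i, dg a i = m i) ->
  l = comp L a b -> pre l m = a /\ suf l m = b.
Proof.
move=> hab ha hl.
have hdl i : dg l i = dg a i + dg b i by rewrite hl deg_comp.
have hm : deg_le m (dg l) by move=> i; rewrite hdl -ha leq_addr.
have [h1 h2 h3 h4] := pre_sufP hm.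
have hb i : dg b i = dg l i - m i by rewrite hdl -ha addKn.
have := factorisation_uniq h1 hab h2 h3 ha hb.
by rewrite -h4 -hl; case.
Qed.

Lemma rg_pre l m : deg_le m (dg l) -> rg L (pre l m) = rg L l.
Proof. by move=> /pre_sufP [h _ _ e]; rewrite {2}e rg_comp. Qed.

Lemma sr_suf l m : deg_le m (dg l) -> sr L (suf l m) = sr L l.
Proof. by move=> /pre_sufP [h _ _ e]; rewrite {2}e sr_comp. Qed.

Lemma idp_deg0 l : (forall i, dg l i = 0) -> l = idp L (rg L l).
Proof.
move=> h.
have [] // := @factorisation_uniq _ L deg0 deg0 (idp L (rg L l)) l l (idp L (sr L l)).
- by rewrite sr_idp.
- by rewrite rg_idp.
- by move=> i; rewrite deg_idp.
- by move=> i; rewrite deg_idp.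
- by rewrite comp_idl comp_idr.
Qed.

Lemma pre_deg l : pre l (dg l) = l.
Proof.
by have [] := @pre_suf_unique l (dg l) l (idp L (sr L l)); rewrite ?rg_idp ?comp_idr.
Qed.

Lemma suf_deg0 l : suf l deg0 = l.
Proof.
have [] // := @pre_suf_unique l deg0 (idp L (rg L l)) l; rewrite ?sr_idp ?comp_idl //.
by move=> i; rewrite deg_idp.
Qed.

Lemma pre_pre l m n : deg_le m n -> deg_le n (dg l) -> pre (pre l n) m = pre l m.
Proof.
move=> hmn hn; have [a1 a2 _ a4] := pre_sufP hn.
have hm : deg_le m (dg (pre l n)) by move=> i; rewrite a2.
have [b1 b2 _ b4] := pre_sufP hm.
have hs : sr L (suf (pre l n) m) = rg L (suf l n) by rewrite sr_suf.
have e : l = comp L (pre (pre l n) m) (comp L (suf (pre l n) m) (suf l n)).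
  by rewrite compA // -b4.
by have [] := pre_suf_unique _ b2 e; rewrite ?rg_comp.
Qed.

Lemma pre_suf_comp a b m : sr L a = rg L b -> deg_le m (dg b) ->
  pre (comp L a b) (deg_add (dg a) m) = comp L a (pre b m) /\
  suf (comp L a b) (deg_add (dg a) m) = suf b m.
Proof.
move=> hab hm; have [a1 a2 _ a4] := pre_sufP hm.
have hr : sr L a = rg L (pre b m) by rewrite rg_pre.
apply: pre_suf_unique; first by rewrite sr_comp.
  by move=> i; rewrite deg_comp // a2.
by rewrite -compA // -a4.
Qed.

Lemma deg_le_suf l a b : deg_le (deg_add a b) (dg l) -> deg_le b (dg (suf l a)).
Proof.
move=> h i; have ha := deg_le_trans (deg_le_addr a b) h.
by have [_ _ -> _] := pre_sufP ha; rewrite leq_subRL ?ha //; apply: h.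
Qed.

Lemma pre_suf_add l a b : deg_le (deg_add a b) (dg l) ->
  pre l (deg_add a b) = comp L (pre l a) (pre (suf l a) b) /\
  suf l (deg_add a b) = suf (suf l a) b.
Proof.
move=> h.
have [a1 a2 _ a4] := pre_sufP (deg_le_trans (deg_le_addr a b) h).
have [b1 b2 _ b4] := pre_sufP (deg_le_suf h).
have hr : sr L (pre l a) = rg L (pre (suf l a) b) by rewrite rg_pre //; apply: deg_le_suf.
apply: pre_suf_unique; first by rewrite sr_comp.
  by move=> i; rewrite deg_comp // a2 b2.
by rewrite -compA // -b4.
Qed.

Lemma pre_suf l m n : deg_le (deg_add m n) (dg l) ->
  pre (suf l m) n = suf (pre l (deg_add m n)) m.
Proof.
move=> h; have [e _] := pre_suf_add h.
have [a1 a2 _ _] := pre_sufP (deg_le_trans (deg_le_addr m n) h).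
have [] // := pre_suf_unique _ a2 e.
by rewrite rg_pre; last exact: deg_le_suf h.
Qed.

End Factorisation.

Arguments deg0 {k}.

Section InfinitePaths.
Variables (k : nat) (L : kgraph k).
Local Notation P := (kpath L).
Local Notation dg := (deg L).

(* An infinite path, i.e. a degree-preserving functor from [Omega_k], is encoded by its
   initial segments [x n] of every degree [n]. *)
Record infpath := InfPath {
  ipath_at :> ('I_k -> nat) -> P;
  deg_ipath : forall n i, dg (ipath_at n) i = n i;
  pre_ipath : forall m n, deg_le m n -> pre (ipath_at n) m = ipath_at m }.

Lemma infpath_ext (x y : infpath) : x =1 y -> x = y.
Proof.
case: x y => [f1 d1 c1] [f2 d2 c2] /= /functional_extensionality e; subst f2.
by rewrite (proof_irrelevance _ d1 d2) (proof_irrelevance _ c1 c2).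
Qed.

Definition irg (x : infpath) := rg L (x deg0).

Lemma deg_le_ipath (x : infpath) m n : deg_le m n -> deg_le m (dg (x n)).
Proof. by move=> h i; rewrite deg_ipath. Qed.

Lemma rg_ipath (x : infpath) n : rg L (x n) = irg x.
Proof. by rewrite /irg -(@pre_ipath x deg0 n) ?rg_pre // deg_le_ipath. Qed.

Lemma ipath_deg0 (x : infpath) : x deg0 = idp L (irg x).
Proof. by apply: idp_deg0 => i; rewrite deg_ipath. Qed.

Section Shift.
Variables (m : 'I_k -> nat) (x : infpath).

Definition ishift_at n := suf (x (deg_add m n)) m.

Lemma deg_ishift n i : dg (ishift_at n) i = n i.
Proof.
have [_ _ -> _] := pre_sufP (deg_le_ipath x (deg_le_addr m n)).
by rewrite deg_ipath /deg_add addKn.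
Qed.

Lemma pre_ishift a b : deg_le a b -> pre (ishift_at b) a = ishift_at a.
Proof.
move=> hab; rewrite /ishift_at pre_suf; last exact/deg_le_ipath/deg_le_add2l.
by rewrite pre_ipath //; apply: deg_le_add2l.
Qed.

Definition ishift := InfPath deg_ishift pre_ishift.

End Shift.

Lemma ishift0 (x : infpath) : ishift deg0 x = x.
Proof.
apply: infpath_ext => n /=; rewrite /ishift_at.
have -> : deg_add deg0 n = n by apply: functional_extensionality.
exact: suf_deg0.
Qed.

Lemma ipath_split (x : infpath) a b :
  sr L (x a) = rg L (ishift a x b) /\ x (deg_add a b) = comp L (x a) (ishift a x b).
Proof.
have [h1 _ _ h4] := pre_sufP (deg_le_ipath x (deg_le_addr a b)).
by rewrite (pre_ipath x (deg_le_addr a b)) in h1 h4.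
Qed.

Lemma irg_ishift m (x : infpath) : irg (ishift m x) = sr L (x m).
Proof. by have [-> _] := ipath_split x m deg0. Qed.

Lemma ishiftD a b (x : infpath) : ishift b (ishift a x) = ishift (deg_add a b) x.
Proof.
apply: infpath_ext => n; rewrite /= /ishift_at -deg_addA.
have := deg_le_ipath x (deg_le_addr (deg_add a b) n); rewrite -deg_addA.
by case/pre_suf_add => _ ->.
Qed.

Section Concatenation.
Variables (l : P) (x : infpath).
Hypothesis lx : sr L l = irg x.

Definition icat_at n := pre (comp L l (x n)) n.

Lemma deg_comp_ipath n : deg_le n (dg (comp L l (x n))).
Proof. by move=> i; rewrite deg_comp ?rg_ipath // deg_ipath leq_addl. Qed.

Lemma deg_icat n i : dg (icat_at n) i = n i.
Proof. by have [_ -> _ _] := pre_sufP (deg_comp_ipath n). Qed.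

Lemma pre_icat a b : deg_le a b -> pre (icat_at b) a = icat_at a.
Proof.
move=> hab; rewrite /icat_at.
have hs : sr L l = rg L (x b) by rewrite rg_ipath.
have [e _] := pre_suf_comp hs (deg_le_ipath x hab); rewrite pre_ipath // in e.
rewrite -e (pre_pre hab) ?pre_pre //; first by move=> i; apply: leq_addl.
- by move=> i; rewrite deg_comp // deg_ipath leq_add2l.
- exact: deg_comp_ipath.
Qed.

End Concatenation.

Definition icat l (x : infpath) : infpath :=
  match excluded_middle_informative (sr L l = irg x) with
  | left lx => InfPath (deg_icat lx) (pre_icat lx)
  | right _ => x
  end.

Lemma icatE l (x : infpath) n : sr L l = irg x -> icat l x n = pre (comp L l (x n)) n.
Proof. by rewrite /icat; case: excluded_middle_informative. Qed.

Lemma irg_icat l (x : infpath) : sr L l = irg x -> irg (icat l x) = rg L l.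
Proof. by move=> h; rewrite /irg icatE // rg_pre ?rg_comp ?rg_ipath // deg_comp_ipath. Qed.

Lemma icat_deg l (x : infpath) : sr L l = irg x -> icat l x (dg l) = l.
Proof.
move=> h; have hs : sr L l = rg L (x (dg l)) by rewrite rg_ipath.
by rewrite icatE //; have [] := pre_suf_unique hs (fun=> erefl) erefl.
Qed.

Lemma ishift_icat l (x : infpath) : sr L l = irg x -> ishift (dg l) (icat l x) = x.
Proof.
move=> h; apply: infpath_ext => n /=; rewrite /ishift_at icatE //.
have hs m : sr L l = rg L (x m) by rewrite rg_ipath.
have [-> _] := pre_suf_comp (hs _) (deg_le_ipath x (fun i => leq_addl (dg l i) (n i))).
rewrite pre_ipath; last by move=> i; apply: leq_addl.
by have [_ ->] := pre_suf_unique (hs n) (fun=> erefl) erefl.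
Qed.

Lemma icat_ishift l (x : infpath) : x (dg l) = l -> icat l (ishift (dg l) x) = x.
Proof.
move=> hx; have hs : sr L l = irg (ishift (dg l) x) by rewrite irg_ishift hx.
apply: infpath_ext => n; rewrite icatE //.
have [_ e] := ipath_split x (dg l) n.
by rewrite -{1}hx -e pre_ipath // => i; apply: leq_addl.
Qed.

Lemma icat_comp l mu (x : infpath) : sr L l = rg L mu -> sr L mu = irg x ->
  icat l (icat mu x) = icat (comp L l mu) x.
Proof.
move=> h1 h2; have h3 : sr L l = irg (icat mu x) by rewrite irg_icat.
have h4 : sr L (comp L l mu) = irg x by rewrite sr_comp.
apply: infpath_ext => n; rewrite !icatE //.
have h1' : sr L l = rg L (comp L mu (x n)) by rewrite rg_comp ?rg_ipath.
have [<- _] := pre_suf_comp h1' (deg_comp_ipath h2 n).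
rewrite pre_pre ?compA ?rg_ipath //; first by move=> i; apply: leq_addl.
move=> i; rewrite !deg_comp ?rg_comp ?rg_ipath //.
by rewrite /deg_add deg_ipath -addnA leq_add2l leq_addl.
Qed.

Lemma icat_idp (x : infpath) : icat (idp L (irg x)) x = x.
Proof.
apply: infpath_ext => n; rewrite icatE ?sr_idp // -(rg_ipath x n) comp_idl.
exact: pre_ipath.
Qed.

End InfinitePaths.

(* Otherwise [/=] unfolds [ishift m x n] and it no longer matches [ipath_split]. *)
Arguments ishift {k L} m x : simpl never.

Section InfinitePathExistence.
Variables (k : nat) (L : kgraph k).
Hypothesis HL : row_finite_no_sources L.
Local Notation P := (kpath L).
Local Notation dg := (deg L).

Definition const_deg (j : nat) : 'I_k -> nat := fun _ => j.

Definition unit_path (w : vert L) : P :=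
  epsilon (inhabits (idp L w)) (fun l => rg L l = w /\ forall i, dg l i = 1).

Lemma unit_pathP w : rg L (unit_path w) = w /\ forall i, dg (unit_path w) i = 1.
Proof. exact: epsilon_spec (HL w (const_deg 1)).2. Qed.

Variable v : vert L.

Fixpoint diag_path (j : nat) : P :=
  if j is j'.+1 then comp L (diag_path j') (unit_path (sr L (diag_path j')))
  else idp L v.

Lemma diag_path_deg j : dg (diag_path j) = const_deg j.
Proof.
apply: functional_extensionality => i.
elim: j => [|j IH] /=; first by rewrite deg_idp.
have [h1 h2] := unit_pathP (sr L (diag_path j)).
by rewrite deg_comp ?h1 // IH h2 addn1.
Qed.

Lemma rg_diag_path j : rg L (diag_path j) = v.
Proof.
elim: j => [|j IH] /=; first by rewrite rg_idp.
by rewrite rg_comp ?(unit_pathP _).1.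
Qed.

Lemma pre_diag_path j j' : j <= j' -> pre (diag_path j') (const_deg j) = diag_path j.
Proof.
elim: j' => [|j' IH]; first by rewrite leqn0 => /eqP ->; rewrite -diag_path_deg pre_deg.
rewrite leq_eqVlt => /orP [/eqP ->|hj]; first by rewrite -diag_path_deg pre_deg.
have e : pre (diag_path j'.+1) (const_deg j') = diag_path j'.
  apply: (pre_suf_unique (esym (unit_pathP _).1) _ erefl).1.
  by move=> i; rewrite diag_path_deg.
by rewrite -(IH hj) -e pre_pre // => i; rewrite diag_path_deg.
Qed.

Definition deg_max (n : 'I_k -> nat) := \max_i n i.

Lemma deg_le_diag_path n : deg_le n (dg (diag_path (deg_max n))).
Proof. by move=> i; rewrite diag_path_deg leq_bigmax. Qed.

Lemma deg_ipath_from n i : dg (pre (diag_path (deg_max n)) n) i = n i.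
Proof. by have [_ -> _ _] := pre_sufP (deg_le_diag_path n). Qed.

Lemma pre_ipath_from m n : deg_le m n ->
  pre (pre (diag_path (deg_max n)) n) m = pre (diag_path (deg_max m)) m.
Proof.
move=> hmn.
have hN : deg_max m <= deg_max n.
  by apply/bigmax_leqP => i _; apply: leq_trans (hmn i) (leq_bigmax i).
rewrite pre_pre //; last exact: deg_le_diag_path.
rewrite -(pre_diag_path hN) pre_pre //; first by move=> i; rewrite leq_bigmax.
by move=> i; rewrite diag_path_deg.
Qed.

Definition ipath_from := InfPath deg_ipath_from pre_ipath_from.

Lemma irg_ipath_from : irg ipath_from = v.
Proof. by rewrite /irg /= rg_pre ?rg_diag_path //; apply: deg_le_diag_path. Qed.

End InfinitePathExistence.

Local Open Scope ring_scope.

Section PathOperators.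
Variables (k : nat) (L : kgraph k) (R : comNzRingType).
Local Notation F := (infpath L -> R).

(* The fields do not mention [x0]: it only witnesses that the path space is nonempty,
   which is what makes this ring nontrivial. *)
Record pathop (x0 : infpath L) := PathOp {
  pathop_app :> F -> F;
  pathopD : forall f g : F,
    pathop_app (fun y => f y + g y) = (fun y => pathop_app f y + pathop_app g y);
  pathopZ : forall (a : R) (f : F),
    pathop_app (fun y => a * f y) = (fun y => a * pathop_app f y) }.

Variable x0 : infpath L.
Local Notation op := (pathop x0).

Lemma pathop_ext (T U : op) : (forall f y, T f y = U f y) -> T = U.
Proof.
case: T U => [t1 a1 s1] [t2 a2 s2] /= h.
have e : t1 = t2.
  by apply: functional_extensionality => f; apply: functional_extensionality.
subst t2; by rewrite (proof_irrelevance _ a1 a2) (proof_irrelevance _ s1 s2).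
Qed.

HB.instance Definition _ := boolp.gen_eqMixin op.
HB.instance Definition _ := boolp.gen_choiceMixin op.

Program Definition pathop0 : op := @PathOp x0 (fun f y => 0) _ _.
Next Obligation. by apply: functional_extensionality => y; rewrite addr0. Qed.
Next Obligation. by apply: functional_extensionality => y; rewrite mulr0. Qed.

Program Definition pathop_add (T U : op) : op := @PathOp x0 (fun f y => T f y + U f y) _ _.
Next Obligation. by apply: functional_extensionality => y; rewrite !pathopD addrACA. Qed.
Next Obligation. by apply: functional_extensionality => y; rewrite !pathopZ mulrDr. Qed.

Program Definition pathop_opp (T : op) : op := @PathOp x0 (fun f y => - T f y) _ _.
Next Obligation. by apply: functional_extensionality => y; rewrite pathopD opprD. Qed.
Next Obligation. by apply: functional_extensionality => y; rewrite pathopZ mulrN. Qed.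

Definition pathop1 : op := @PathOp x0 id (fun _ _ => erefl) (fun _ _ => erefl).

Program Definition pathop_mul (T U : op) : op := @PathOp x0 (fun f => T (U f)) _ _.
Next Obligation. by rewrite !pathopD. Qed.
Next Obligation. by rewrite !pathopZ. Qed.

Program Definition pathop_scale (a : R) (T : op) : op :=
  @PathOp x0 (fun f y => a * T f y) _ _.
Next Obligation. by apply: functional_extensionality => y; rewrite pathopD mulrDr. Qed.
Next Obligation.
by apply: functional_extensionality => y; rewrite pathopZ mulrA (mulrC a) mulrA.
Qed.

Lemma pathop_addA : associative pathop_add.
Proof. by move=> *; apply: pathop_ext => f y /=; rewrite addrA. Qed.
Lemma pathop_addC : commutative pathop_add.
Proof. by move=> *; apply: pathop_ext => f y /=; rewrite addrC. Qed.
Lemma pathop_add0 : left_id pathop0 pathop_add.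
Proof. by move=> *; apply: pathop_ext => f y /=; rewrite add0r. Qed.
Lemma pathop_addN : left_inverse pathop0 pathop_opp pathop_add.
Proof. by move=> *; apply: pathop_ext => f y /=; rewrite addNr. Qed.

HB.instance Definition _ :=
  GRing.isZmodule.Build op pathop_addA pathop_addC pathop_add0 pathop_addN.

Lemma pathop_mulA : associative pathop_mul.
Proof. by move=> *; apply: pathop_ext. Qed.
Lemma pathop_mul1 : left_id pathop1 pathop_mul.
Proof. by move=> *; apply: pathop_ext. Qed.
Lemma pathop_mulr1 : right_id pathop1 pathop_mul.
Proof. by move=> *; apply: pathop_ext. Qed.
Lemma pathop_mulDl : left_distributive pathop_mul (@GRing.add op).
Proof. by move=> *; apply: pathop_ext. Qed.
Lemma pathop_mulDr : right_distributive pathop_mul (@GRing.add op).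
Proof. by move=> T U V; apply: pathop_ext => f y /=; rewrite pathopD. Qed.
Lemma pathop1_neq0 : pathop1 != 0.
Proof.
apply/eqP => /(congr1 (fun T : op => T (fun _ => 1) x0)) /= /eqP.
by rewrite oner_eq0.
Qed.

HB.instance Definition _ := GRing.Zmodule_isNzRing.Build op
  pathop_mulA pathop_mul1 pathop_mulr1 pathop_mulDl pathop_mulDr pathop1_neq0.

Lemma pathop_scaleA a b (T : op) : pathop_scale a (pathop_scale b T) = pathop_scale (a * b) T.
Proof. by apply: pathop_ext => f y /=; rewrite mulrA. Qed.
Lemma pathop_scale1 : left_id 1 pathop_scale.
Proof. by move=> T; apply: pathop_ext => f y /=; rewrite mul1r. Qed.
Lemma pathop_scaleDr : right_distributive pathop_scale (@GRing.add op).
Proof. by move=> a T U; apply: pathop_ext => f y /=; rewrite mulrDr. Qed.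
Lemma pathop_scaleDl (T : op) : {morph pathop_scale^~ T : a b / a + b}.
Proof. by move=> a b; apply: pathop_ext => f y /=; rewrite mulrDl. Qed.

HB.instance Definition _ := GRing.Zmodule_isLmodule.Build R op
  pathop_scaleA pathop_scale1 pathop_scaleDr pathop_scaleDl.

Lemma pathop_scaleAl (a : R) (T U : op) : a *: (T * U) = (a *: T) * U.
Proof. by apply: pathop_ext. Qed.
HB.instance Definition _ := GRing.Lmodule_isLalgebra.Build R op pathop_scaleAl.

Lemma pathop_scaleAr (a : R) (T U : op) : a *: (T * U) = T * (a *: U).
Proof. by apply: pathop_ext => f y /=; rewrite pathopZ. Qed.
HB.instance Definition _ := GRing.Lalgebra_isAlgebra.Build R op pathop_scaleAr.

End PathOperators.

Lemma sum_if_eq_uniq (V : nmodType) (T : eqType) (s : seq T) (a : T) (c : V) : uniq s ->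
  \sum_(l <- s) (if a == l then c else 0) = if a \in s then c else 0.
Proof.
elim: s => [|b s IH]; first by rewrite big_nil.
rewrite big_cons in_cons /= => /andP [hb hu]; rewrite IH //.
case: eqP => [->|_] /=; last by rewrite add0r.
by rewrite (negbTE hb) addr0.
Qed.

Section PathRepresentation.
Variables (k : nat) (L : kgraph k) (R : comNzRingType) (x0 : infpath L).
Local Notation op := (pathop R x0).
Local Notation dg := (deg L).

Program Definition pmap_op (c : pred (infpath L)) (phi : infpath L -> infpath L) : op :=
  @PathOp _ _ R x0 (fun f y => if c y then f (phi y) else 0) _ _.
Next Obligation. by apply: functional_extensionality => y; case: (c y); rewrite ?addr0. Qed.
Next Obligation. by apply: functional_extensionality => y; case: (c y); rewrite ?mulr0. Qed.

Lemma pmap_opM c1 c2 phi1 phi2 :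
  pmap_op c1 phi1 * pmap_op c2 phi2 = pmap_op (fun y => c1 y && c2 (phi1 y)) (phi2 \o phi1).
Proof. by apply: pathop_ext => f y /=; case: (c1 y). Qed.

Lemma eq_pmap_op (c c' : pred (infpath L)) (phi phi' : infpath L -> infpath L) :
  c =1 c' -> (forall y, c y -> phi y = phi' y) -> pmap_op c phi = pmap_op c' phi'.
Proof.
by move=> h1 h2; apply: pathop_ext => f y /=; rewrite -h1; case: ifP => // /h2 ->.
Qed.

Lemma pmap_op_eq0 c phi : c =1 pred0 -> pmap_op c phi = 0.
Proof. by move=> h; apply: pathop_ext => f y /=; rewrite h. Qed.

Lemma pathop_sumE I (s : seq I) (T : I -> op) f y :
  (\sum_(i <- s) T i) f y = \sum_(i <- s) T i f y.
Proof. by elim: s => [|a s IH]; rewrite ?big_nil // !big_cons /= IH. Qed.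

Definition vertex_op v := pmap_op (fun y => irg y == v) id.
Definition path_op l := pmap_op (fun y => y (dg l) == l) (ishift (dg l)).
Definition path_adj_op l := pmap_op (fun y => irg y == sr L l) (icat l).

Lemma pathop_deg0 l : (forall i, dg l i = 0) ->
  path_op l = vertex_op (rg L l) /\ path_adj_op l = vertex_op (rg L l).
Proof.
move=> hl; have el := idp_deg0 hl.
have ed : dg l = deg0 by apply: functional_extensionality.
split; apply: eq_pmap_op => y.
- by rewrite /= ed ipath_deg0 {1}el (inj_eq (can_inj (@rg_idp _ L))).
- by rewrite ed ishift0.
- by rewrite /= {1}el sr_idp.
- move=> /eqP h; have e : rg L l = irg y by rewrite h {2}el sr_idp.
  by rewrite el e icat_idp.
Qed.

Lemma vertex_op_idem v : vertex_op v * vertex_op v = vertex_op v.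
Proof. by rewrite pmap_opM; apply: eq_pmap_op => y //=; rewrite andbb. Qed.

Lemma vertex_op_orth v w : v <> w -> vertex_op v * vertex_op w = 0.
Proof.
move=> hvw; rewrite pmap_opM; apply: pmap_op_eq0 => y /=.
by case: eqP => // ->; apply/eqP.
Qed.

Lemma path_opM l mu : sr L l = rg L mu -> path_op l * path_op mu = path_op (comp L l mu).
Proof.
move=> hlm; have ed := deg_comp_add hlm.
rewrite pmap_opM; apply: eq_pmap_op => y; last by rewrite ed /= ishiftD.
rewrite ed; have [hs ->] := ipath_split y (dg l) (dg mu).
apply/idP/eqP => [/andP [/eqP -> /eqP ->] //|h].
have [a1 a2] := pre_suf_unique hlm (fun=> erefl) erefl.
have [b1 b2] := pre_suf_unique hs (deg_ipath y (dg l)) erefl.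
by rewrite h a1 a2 in b1 b2; rewrite -b1 -b2 !eqxx.
Qed.

Lemma path_adj_opM l mu : sr L l = rg L mu ->
  path_adj_op mu * path_adj_op l = path_adj_op (comp L l mu).
Proof.
move=> hlm; rewrite pmap_opM; apply: eq_pmap_op => y /=.
  by rewrite sr_comp //; case: eqP => //= h; rewrite irg_icat // -hlm eqxx.
by move=> /andP [/eqP h _]; rewrite icat_comp.
Qed.

Lemma pathop_proj l :
  vertex_op (rg L l) * path_op l = path_op l /\ path_op l * vertex_op (sr L l) = path_op l /\
  vertex_op (sr L l) * path_adj_op l = path_adj_op l /\
  path_adj_op l * vertex_op (rg L l) = path_adj_op l.
Proof.
split; [|split; [|split]]; rewrite pmap_opM; apply: eq_pmap_op => y //=.
- by case: (y (dg l) =P l) => [<-|]; rewrite ?rg_ipath ?eqxx ?andbF.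
- by case: eqP => //= h; rewrite irg_ishift h eqxx.
- by rewrite andbb.
- by case: eqP => //= h; rewrite irg_icat // eqxx.
Qed.

Lemma path_adj_op_path_op l mu : (forall i, dg l i = dg mu i) ->
  path_adj_op l * path_op mu = if l == mu then vertex_op (sr L l) else 0.
Proof.
move=> hd; have ed : dg mu = dg l by apply: functional_extensionality => i; rewrite hd.
rewrite pmap_opM ed; case: eqP => [<-|hne].
  apply: eq_pmap_op => y /=; first by case: eqP => //= h; rewrite icat_deg // eqxx.
  by move=> /andP [/eqP h _]; rewrite ishift_icat.
apply: pmap_op_eq0 => y /=.
by case: eqP => //= h; rewrite icat_deg //; apply/eqP.
Qed.

Lemma vertex_op_sum v n sq : enumerates v n sq ->
  vertex_op v = \sum_(l <- sq) path_op l * path_adj_op l.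
Proof.
move=> [hu hsq]; apply: pathop_ext => f y; rewrite pathop_sumE.
have hterm l : l \in sq -> (path_op l * path_adj_op l) f y = if y n == l then f y else 0.
  move=> hl; have [_ hd] := (hsq l).1 hl.
  have ed : dg l = n by apply: functional_extensionality.
  rewrite pmap_opM /= ed.
  case: (y n =P l) => //= h; rewrite irg_ishift h eqxx.
  by rewrite -ed icat_ishift // ed.
rewrite (eq_big_seq _ hterm) sum_if_eq_uniq //=.
have -> // : (y n \in sq) = (irg y == v).
apply/idP/eqP => [/hsq [<- _]|hv]; first by rewrite rg_ipath.
by apply/hsq; rewrite rg_ipath hv; split=> // i; apply: deg_ipath.
Qed.

Lemma pathop_KP_family : is_KP_family vertex_op path_op path_adj_op.
Proof.
split; first exact: pathop_deg0.
split; first exact: vertex_op_idem.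
split; first exact: vertex_op_orth.
split; first by move=> l mu h; split; [apply: path_opM | apply: path_adj_opM]; rewrite h.
split; first exact: pathop_proj.
split; first exact: path_adj_op_path_op.
by move=> v n sq _; apply: vertex_op_sum.
Qed.

End PathRepresentation.

Lemma scale_vertex_neq0 k (L : kgraph k) (R : comNzRingType) (A : algType R)
    (p : vert L -> A) (s st : kpath L -> A) :
  row_finite_no_sources L -> KP_universal p s st ->
  forall (r : R) v, r != 0 -> r *: p v != 0.
Proof.
move=> HL Huniv r v Hr; apply/eqP => h.
pose x0 := ipath_from HL v.
have [phi [phiD phiZ _ phi_p _]] := Huniv _ _ _ _ (pathop_KP_family R x0).
have phi0 : phi 0 = 0 by apply: (@addrI _ (phi 0)); rewrite -phiD !addr0.
move: (congr1 phi h); rewrite phi0 phiZ phi_p.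
move=> /(congr1 (fun T : pathop R x0 => T (fun=> 1) x0)) /=.
by rewrite irg_ipath_from eqxx mulr1 => /eqP; rewrite (negbTE Hr).
Qed.

Section KPFamilies.
Variables (k : nat) (L : kgraph k) (R : comNzRingType) (A : algType R).
Variables (p : vert L -> A) (s st : kpath L -> A).
Hypothesis HKP : is_KP_family p s st.
Local Notation dg := (deg L).

Lemma KP_vertex_idem v : p v * p v = p v.
Proof. by have [_ [h _]] := HKP. Qed.

Lemma KP_mul l mu : rg L mu = sr L l ->
  s l * s mu = s (comp L l mu) /\ st mu * st l = st (comp L l mu).
Proof. by have [_ [_ [_ [h _]]]] := HKP; apply: h. Qed.

Lemma KP_path_sr l : s l * p (sr L l) = s l.
Proof. by have [_ [_ [_ [_ [h _]]]]] := HKP; case: (h l) => _ []. Qed.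

Lemma KP_sr_adj l : p (sr L l) * st l = st l.
Proof. by have [_ [_ [_ [_ [h _]]]]] := HKP; case: (h l) => _ [_ []]. Qed.

Lemma KP_adj_mul l mu : (forall i, dg l i = dg mu i) ->
  st l * s mu = if l == mu then p (sr L l) else 0.
Proof. by have [_ [_ [_ [_ [_ [h _]]]]]] := HKP; apply: h. Qed.

Lemma KP_adj_path l : st l * s l = p (sr L l).
Proof. by rewrite KP_adj_mul // eqxx. Qed.

Lemma mulr_adj_path z l : z * st l * s l = z * p (sr L l).
Proof. by rewrite -mulrA KP_adj_path. Qed.

Lemma mulr_path_sr z l : z * s l * p (sr L l) = z * s l.
Proof. by rewrite -mulrA KP_path_sr. Qed.

Lemma mulr_sr_adj z l : z * p (sr L l) * st l = z * st l.
Proof. by rewrite -mulrA KP_sr_adj. Qed.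

(* (KP4) is only assumed for nonzero degrees; for degree 0 it follows from
   (KP1) and the convention [s_v = s_v^* = p_v]. *)
Lemma KP_vertex_sum v n sq : enumerates v n sq -> p v = \sum_(l <- sq) s l * st l.
Proof.
have [hconv [_ [_ [_ [_ [_ hsum]]]]]] := HKP.
move=> hen; case: (classic (exists i, n i <> 0)) => [hn|hn]; first exact: hsum hn hen.
have hn0 i : n i = 0 by case: (n i =P 0) => // hi; case: hn; exists i.
have [hu hsq] := hen.
have -> : sq = [:: idp L v].
  apply/perm_small_eq => //; apply: uniq_perm => // l; rewrite inE.
  apply/idP/eqP => [/hsq [hr hd]|->]; first by rewrite -hr; apply: idp_deg0 => i; rewrite hd.
  by apply/hsq; rewrite rg_idp; split=> // i; rewrite deg_idp hn0.
by rewrite big_seq1; have [-> ->] := hconv _ (deg_idp v); rewrite rg_idp KP_vertex_idem.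
Qed.

Lemma diag_proj_extend mu n sq : enumerates (sr L mu) n sq ->
  s mu * st mu = \sum_(l <- map (comp L mu) sq) s l * st l.
Proof.
move=> hen; have [_ hsq] := hen.
rewrite -{1}KP_path_sr (KP_vertex_sum hen) big_map mulr_sumr mulr_suml.
apply: eq_big_seq => a ha; have [hr _] := (hsq a).1 ha.
have [e1 e2] := KP_mul hr.
by rewrite !mulrA e1 -mulrA e2.
Qed.

Lemma diag_proj_extend_to (HL : row_finite_no_sources L) mu (N : 'I_k -> nat) :
  deg_le (dg mu) N -> exists2 T : seq (kpath L),
    uniq T /\ (forall l, l \in T -> forall i, dg l i = N i) &
    s mu * st mu = \sum_(l <- T) s l * st l.
Proof.
move=> hN; have [[sq hen] _] := HL (sr L mu) (fun i => N i - dg mu i)%N.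
exists (map (comp L mu) sq); last exact: diag_proj_extend hen.
have [hu hsq] := hen; split.
  rewrite map_inj_in_uniq // => a b ha hb e.
  have [ra _] := (hsq a).1 ha; have [rb _] := (hsq b).1 hb.
  have [_ <-] := pre_suf_unique (esym ra) (fun=> erefl) erefl.
  by have [_ <-] := pre_suf_unique (esym rb) (fun=> erefl) erefl; rewrite e.
move=> l /mapP [a ha ->] i; have [ra da] := (hsq a).1 ha.
by rewrite deg_comp ?ra // da subnKC.
Qed.

Lemma diag_proj_sandwich (T : seq (kpath L)) (N : 'I_k -> nat) l0 : uniq T ->
  (forall l, l \in T -> forall i, dg l i = N i) -> (forall i, dg l0 i = N i) ->
  st l0 * (\sum_(l <- T) s l * st l) * s l0 = if l0 \in T then p (sr L l0) else 0.
Proof.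
move=> hu hT h0; rewrite mulr_sumr mulr_suml -(sum_if_eq_uniq _ _ hu).
apply: eq_big_seq => l hl.
rewrite !mulrA KP_adj_mul => [|i]; last by rewrite h0 hT.
case: eqP => [<-|_]; last by rewrite !mul0r.
by rewrite mulr_adj_path KP_vertex_idem.
Qed.

Lemma scaled_diag_proj_eq mu nu (r : R) : sr L mu = sr L nu ->
  r *: (s mu * st nu) * (s mu * st mu) = s mu * st mu * (r *: (s mu * st nu)) ->
  r *: (s mu * st nu) * (s nu * st nu) = s nu * st nu * (r *: (s mu * st nu)) ->
  r *: (s mu * st mu) = r *: (s nu * st nu).
Proof.
move=> hsrc cmu cnu; rewrite -!scalerAl -!scalerAr !mulrA in cmu cnu.
rewrite mulr_adj_path hsrc mulr_sr_adj in cmu.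
rewrite mulr_adj_path mulr_sr_adj in cnu.
have h1 : r *: (s nu * st nu * (s mu * st mu)) = r *: (s nu * st nu).
  move/(congr1 (fun z => s nu * st mu * z)): cmu.
  by rewrite -!scalerAr !mulrA !mulr_adj_path hsrc !mulr_sr_adj.
have h2 : r *: (s mu * st mu) = r *: (s nu * st nu * (s mu * st mu)).
  move/(congr1 (fun z => z * (s nu * st mu))): cnu.
  by rewrite -!scalerAl !mulrA !mulr_adj_path -hsrc mulr_sr_adj mulr_path_sr.
by rewrite h2 h1.
Qed.

Section ScaleCancellation.
Variable r : R.
Hypothesis r_vertex_neq0 : forall v, r *: p v != 0.

Lemma scaled_sum_diag_proj_subset (N : 'I_k -> nat) (T T' : seq (kpath L)) :
  uniq T -> uniq T' ->
  (forall l, l \in T -> forall i, dg l i = N i) ->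
  (forall l, l \in T' -> forall i, dg l i = N i) ->
  r *: (\sum_(l <- T) s l * st l) = r *: (\sum_(l <- T') s l * st l) ->
  {subset T <= T'}.
Proof.
move=> hu hu' hd hd' e l hl; apply: contraTT (r_vertex_neq0 (sr L l)) => hl'.
move/(congr1 (fun z => st l * z * s l)): e.
rewrite -!scalerAr -!scalerAl (diag_proj_sandwich hu hd (hd l hl)).
rewrite (diag_proj_sandwich hu' hd' (hd l hl)) hl (negbTE hl') scaler0.
by move=> ->; rewrite eqxx.
Qed.

Lemma diag_proj_scale_inj (HL : row_finite_no_sources L) mu nu :
  r *: (s mu * st mu) = r *: (s nu * st nu) -> s mu * st mu = s nu * st nu.
Proof.
pose N i := maxn (dg mu i) (dg nu i).
have hmu : deg_le (dg mu) N by move=> i; apply: leq_maxl.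
have hnu : deg_le (dg nu) N by move=> i; apply: leq_maxr.
have [T [hu hd] ->] := diag_proj_extend_to HL hmu.
have [T' [hu' hd'] ->] := diag_proj_extend_to HL hnu.
move=> e; apply: perm_big; apply: uniq_perm => // l; apply/idP/idP.
  exact: scaled_sum_diag_proj_subset hu hu' hd hd' e l.
exact: scaled_sum_diag_proj_subset hu' hu hd' hd (esym e) l.
Qed.

End ScaleCancellation.

End KPFamilies.

Theorem lemma4p8 (k : nat) (L : kgraph k) (HL : row_finite_no_sources L)
    (R : comNzRingType) (A : algType R)
    (p : vert L -> A) (s st : kpath L -> A)
    (HKP : is_KP_family p s st) (Huniv : KP_universal p s st)
    (mu nu : kpath L) (Hsrc : sr L mu = sr L nu)
    (r : R) (Hr : r != 0)
    (HD : KP_diag_commutant p s st (r *: (s mu * st nu))) :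
  s mu * st mu = s nu * st nu.
Proof.
have [_ hcomm] := HD.
have diag_gen l : KP_diag s st (s l * st l) by apply: gs_gen; exists l.
have r_vertex_neq0 v : r *: p v != 0 by apply: scale_vertex_neq0 HL Huniv r v Hr.
apply: (diag_proj_scale_inj HKP r_vertex_neq0 HL).
by apply: (scaled_diag_proj_eq HKP Hsrc); apply/hcomm/diag_gen.
Qed.
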